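(* Let $M$ be a manifold with a Riemannian metric $g$ and a closed $3$-form $H$. Let $D\subset TM\oplus T^\ast M$ be a Dirac structure for the $H$-twisted standard Courant algebroid, and let $\rho\colon D\to TM$ and $\theta\colon D\to T^\ast M$ be vector bundle maps such that $\rho\oplus\theta\colon D\to TM\oplus T^\ast M$ maps $D$ isomorphically onto a Dirac structure $\widetilde D$ of the same $H$-twisted Courant algebroid. Let $\theta^\ast:=g^{-1}\circ\theta\colon D\to TM$. Then the bundle maps $\theta^\ast\pm\rho\colon D\to TM$ are invertible. Choose a local frame $(e_a)$ of $D$ and local coordinates $(x^i)$ on $M$, write $\rho_a=\rho(e_a)=\rho^i_a\partial_i$, $\theta_a=\theta(e_a)=\theta_{ai}\,\mathrm dx^i$, $(\theta^\ast)^k{}_a=g^{kj}\theta_{aj}$, and $H^k{}_{li}=g^{km}H_{mli}$. Define $$T^a_{bi}=[(\theta^\ast+\rho)^{-1}]^a{}_k\Big(\mathring\nabla_i(\theta^\ast+\rho)^k{}_b-\tfrac12\rho^l_b H^k{}_{li}\Big),$$ $$\phi^a_{bi}=[(\theta^\ast-\rho)^{-1}]^a{}_k\Big(\mathring\nabla_i\rho^k_b-\rho^k_cT^c_{bi}\Big),\qquad \omega^a_{bi}=\Gamma^a_{bi}-\phi^a_{bi}+T^a_{bi},$$ and the local $1$-forms $\omega^b_a=\omega^b_{ai}\,\mathrm dx^i$, $\phi^b_a=\phi^b_{ai}\,\mathrm dx^i$. Then for every $a$, $$\mathcal L_{\rho_a}g=\omega^b_a\vee\iota_{\rho_b}g+\phi^b_a\vee\theta_b,\qquad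 \iota_{\rho_a}H=\mathrm d\theta_a-\omega^b_a\wedge\theta_b-\phi^b_a\wedge\iota_{\rho_b}g .$$ Equivalently, the connections $\nabla^\pm=\nabla^\omega\pm\phi$ on $D$ (where $\nabla^\omega e_a=\omega^b_a\otimes e_b$) are $\nabla^+=\nabla^{LC}+T$ and $\nabla^-=\nabla^{LC}+T-2\,\iota_{(\mathring\nabla-T)(\rho)}(\theta^\ast-\rho)^{-1}$.
   Context: The $H$-twisted standard Courant algebroid on $TM\oplus T^\ast M$ has pairing $\langle v+\eta,v'+\eta'\rangle=\iota_v\eta'+\iota_{v'}\eta$ and bracket $[v+\eta,v'+\eta']=[v,v']+\mathcal L_v\eta'-\mathcal L_{v'}\eta-\tfrac12\mathrm d(\iota_v\eta'-\iota_{v'}\eta)-\iota_v\iota_{v'}H$. A Dirac structure is a subbundle of rank $\dim M$ that is isotropic for the pairing and whose sections are closed under the bracket. Every Dirac structure $D$ is of the form $\{(\mathrm{id}-\mathcal O)\mathfrak a\oplus g((\mathrm{id}+\mathcal O)\mathfrak a):\mathfrak a\in TM\}$ for a unique $g$-orthogonal endomorphism $\mathcal O$ of $TM$, so $v\oplus\eta\mapsto\tfrac12(v+g^{-1}\eta)$ is an isomorphism $D\cong TM$. $\nabla^{LC}$ denotes the connection on $D$ obtained from the Levi-Civita connection of $g$ through this isomorphism, with coefficients $\nabla^{LC}e_b=\Gamma^a_{bi}\,\mathrm dx^i\otimes e_a$; $\mathring\nabla$ denotes the covariant derivative on sections of $D^\ast\otimes TM$ built from the Levi-Civita connection of $g$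 on $TM$ and $\nabla^{LC}$ on $D$ (so $\mathring\nabla_i\rho^k_b=\partial_i\rho^k_b+\Gamma^k_{il}\rho^l_b-\Gamma^c_{bi}\rho^k_c$, with $\Gamma^k_{il}$ the Christoffel symbols of $g$). For $1$-forms, $\alpha\vee\beta=\alpha\otimes\beta+\beta\otimes\alpha$ and $\alpha\wedge\beta=\alpha\otimes\beta-\beta\otimes\alpha$; $\iota_{\rho_b}g=g(\rho_b,\cdot)$. In the last formula, $T$ and $(\theta^\ast-\rho)^{-1}$ are viewed as sections of $T^\ast M\otimes D^\ast\otimes D$ (via $T^b_{ai}$) and $T^\ast M\otimes D$, $(\mathring\nabla-T)(\rho)$ has components $\mathring\nabla_i\rho^k_b-\rho^k_cT^c_{bi}$, and the contraction is over the single $TM$ and $T^\ast M$ indices. *)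

(* Local (chart-level) tensor calculus on an open
   subset U of R^n, with points in 'rV[R]_n. *)
From HB Require Import structures.
From mathcomp Require Import all_boot all_order all_algebra.
From mathcomp Require Import all_classical all_reals all_analysis.
Set Implicit Arguments. Unset Strict Implicit. Unset Printing Implicit Defensive.
Import Order.TTheory GRing.Theory Num.Theory.
Import numFieldNormedType.Exports.
Local Open Scope classical_set_scope.
Local Open Scope ring_scope.

Section LocalGeometry.
Context {R : realType} {n : nat}.
Local Notation pt := 'rV[R]_n.
Local Notation idx := 'I_n.

Definition pd (i : idx) (f : pt -> R) : pt -> R :=
  fun x => 'D_(delta_mx 0 i) f x.

Definition iter_pd (l : seq idx) (f : pt -> R) : pt -> R := foldr pd f l.

Definition smooth_on (U : set pt) (f : pt -> R) : Prop :=
  forall (l : seq idx) (x : pt), U x -> differentiable (iter_pd l f) x.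

Definition gmx (g : idx -> idx -> pt -> R) (x : pt) : 'M[R]_n :=
  \matrix_(i, j) g i j x.
Definition ginv (g : idx -> idx -> pt -> R) (k l : idx) (x : pt) : R :=
  invmx (gmx g x) k l.

Definition riemannian_on (U : set pt) (g : idx -> idx -> pt -> R) : Prop :=
  (forall i j, smooth_on U (g i j)) /\
  (forall x, U x -> forall i j, g i j x = g j i x) /\
  (forall x, U x -> forall v : 'rV[R]_n, v != 0 ->
       0 < \sum_(i < n) \sum_(j < n) v 0 i * g i j x * v 0 j).

Definition christoffel (g : idx -> idx -> pt -> R) (k i j : idx) (x : pt) : R :=
  2^-1 * \sum_(m < n) ginv g k m x *
          (pd i (g m j) x + pd j (g m i) x - pd m (g i j) x).

(** a closed 3-form H with components H_{ijk} = H(d_i,d_j,d_k) *)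
Definition closed_three_form_on (U : set pt) (H : idx -> idx -> idx -> pt -> R) : Prop :=
  (forall i j k, smooth_on U (H i j k)) /\
  (forall x, U x -> forall i j k, H i j k x = - H j i k x) /\
  (forall x, U x -> forall i j k, H i j k x = - H i k j x) /\
  (forall x, U x -> forall i j k l,
      pd i (H j k l) x - pd j (H i k l) x + pd k (H i j l) x - pd l (H i j k) x = 0).

(** H-twisted Courant bracket of sections v+eta, v'+eta' of TM (+) T*M
    (components v^k, eta_j); vector part and form part *)
Definition courant_vec (v v' : idx -> pt -> R) (k : idx) (x : pt) : R :=
  \sum_(i < n) (v i x * pd i (v' k) x - v' i x * pd i (v k) x).

Definition courant_form (H : idx -> idx -> idx -> pt -> R)
    (v eta v' eta' : idx -> pt -> R) (j : idx) (x : pt) : R :=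
  (* L_v eta' *)
  \sum_(i < n) (v i x * pd i (eta' j) x + eta' i x * pd j (v i) x)
  (* - L_v' eta *)
  - \sum_(i < n) (v' i x * pd i (eta j) x + eta i x * pd j (v' i) x)
  (* - 1/2 d(i_v eta' - i_v' eta) *)
  - 2^-1 * pd j (fun y => \sum_(i < n) (v i y * eta' i y - v' i y * eta i y)) x
  (* - i_v i_v' H = - H(v', v, .) *)
  - \sum_(i < n) \sum_(l < n) v' i x * v l x * H i l j x.

(** section sum_a f^a e_a of a subbundle with frame e_a = (fv a, feta a) *)
Definition comb (f : idx -> pt -> R) (fr : idx -> idx -> pt -> R) (i : idx) (x : pt) : R :=
  \sum_(a < n) f a x * fr a i x.

Definition in_span (fv feta : idx -> idx -> pt -> R) (x : pt) (w xi : idx -> R) : Prop :=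
  exists c : idx -> R,
    (forall i, w i = \sum_(a < n) c a * fv a i x) /\
    (forall i, xi i = \sum_(a < n) c a * feta a i x).

(** The smooth frame e_a = (fv a) + (feta a), a < n, spans (over U) a Dirac
    structure of the H-twisted standard Courant algebroid: rank n (pointwise
    linearly independent), isotropic, and its smooth sections are closed
    under the bracket. *)
Definition dirac_frame (U : set pt) (H : idx -> idx -> idx -> pt -> R)
    (fv feta : idx -> idx -> pt -> R) : Prop :=
  (forall a i, smooth_on U (fv a i) /\ smooth_on U (feta a i)) /\
  (forall x, U x -> forall c : idx -> R,
      (forall i, \sum_(a < n) c a * fv a i x = 0) ->
      (forall i, \sum_(a < n) c a * feta a i x = 0) -> forall a, c a = 0) /\
  (forall x, U x -> forall a b,
      \sum_(i < n) (fv a i x * feta b i x + fv b i x * feta a i x) = 0) /\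
  (forall f h : idx -> pt -> R,
      (forall a, smooth_on U (f a)) -> (forall a, smooth_on U (h a)) ->
      forall x, U x ->
        in_span fv feta x
          (fun k => courant_vec (comb f fv) (comb h fv) k x)
          (fun j => courant_form H (comb f fv) (comb f feta) (comb h fv) (comb h feta) j x)).

(** Variables: g metric, H 3-form, (fv, feta) frame of D,
    rho a k = rho^k_a, theta a k = theta_{ak}. *)

(** image of e_a under the isomorphism D ~ TM, v+eta |-> (v + g^{-1} eta)/2 *)
Definition Ecomp (g : idx -> idx -> pt -> R) (fv feta : idx -> idx -> pt -> R)
    (a k : idx) (x : pt) : R :=
  2^-1 * (fv a k x + \sum_(j < n) ginv g k j x * feta a j x).

Definition Emx g fv feta (x : pt) : 'M[R]_n := \matrix_(k, a) Ecomp g fv feta a k x.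

(** coefficients Gamma^a_{bi} of nabla^LC on D: nabla^LC e_b = Gamma^a_{bi} dx^i (x) e_a *)
Definition GammaD g fv feta (a b i : idx) (x : pt) : R :=
  \sum_(k < n) invmx (Emx g fv feta x) a k *
    (pd i (Ecomp g fv feta b k) x
     + \sum_(l < n) christoffel g k i l x * Ecomp g fv feta b l x).

(** nabla-ring on sections A of D^* (x) TM with components A k b = A^k_b *)
Definition nablaring g fv feta (A : idx -> idx -> pt -> R) (i k b : idx) (x : pt) : R :=
  pd i (A k b) x + \sum_(l < n) christoffel g k i l x * A l b x
  - \sum_(c < n) GammaD g fv feta c b i x * A k c x.

Definition thetastar g (theta : idx -> idx -> pt -> R) (k a : idx) (x : pt) : R :=
  \sum_(j < n) ginv g k j x * theta a j x.

Definition tsp_mx g (rho theta : idx -> idx -> pt -> R) (x : pt) : 'M[R]_n :=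
  \matrix_(k, a) (thetastar g theta k a x + rho a k x).
Definition tsm_mx g (rho theta : idx -> idx -> pt -> R) (x : pt) : 'M[R]_n :=
  \matrix_(k, a) (thetastar g theta k a x - rho a k x).

Definition Hup g (H : idx -> idx -> idx -> pt -> R) (k l i : idx) (x : pt) : R :=
  \sum_(m < n) ginv g k m x * H m l i x.

Definition Tcoef g H fv feta rho theta (a b i : idx) (x : pt) : R :=
  \sum_(k < n) invmx (tsp_mx g rho theta x) a k *
    (nablaring g fv feta (fun k' b' y => thetastar g theta k' b' y + rho b' k' y) i k b x
     - 2^-1 * \sum_(l < n) rho b l x * Hup g H k l i x).

Definition phicoef g H fv feta rho theta (a b i : idx) (x : pt) : R :=
  \sum_(k < n) invmx (tsm_mx g rho theta x) a k *
    (nablaring g fv feta (fun k' b' y => rho b' k' y) i k b x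
     - \sum_(c < n) rho c k x * Tcoef g H fv feta rho theta c b i x).

Definition omegacoef g H fv feta rho theta (a b i : idx) (x : pt) : R :=
  GammaD g fv feta a b i x - phicoef g H fv feta rho theta a b i x
  + Tcoef g H fv feta rho theta a b i x.

Definition lie_metric (g : idx -> idx -> pt -> R) (v : idx -> pt -> R) (i j : idx) (x : pt) : R :=
  \sum_(k < n) (v k x * pd k (g i j) x + g k j x * pd i (v k) x + g i k x * pd j (v k) x).

Definition iota_g (g : idx -> idx -> pt -> R) (v : idx -> pt -> R) (j : idx) (x : pt) : R :=
  \sum_(k < n) g k j x * v k x.

End LocalGeometry.

From HB Require Import structures.
From mathcomp Require Import all_boot all_order all_algebra.
From mathcomp Require Import all_classical all_reals all_analysis.
From mathcomp Require Import ring lra.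
Set Implicit Arguments. Unset Strict Implicit. Unset Printing Implicit Defensive.
Import Order.TTheory GRing.Theory Num.Theory.
Import numFieldNormedType.Exports.
Local Open Scope classical_set_scope.
Local Open Scope ring_scope.

(* The matrices P = (rho^k_a) and Theta = (theta_(a j)) of the frame of the Dirac
   structure D~ satisfy P^T Theta + Theta^T P = 0 (isotropy) and have no common
   kernel (rank n). If (g^-1 Theta +- P) c = 0, then g(P c, P c) = -+ c^T P^T Theta c
   = 0, so P c = 0, Theta c = 0 and c = 0: theta* +- rho are invertible.

   By definition, T and phi solve (theta* + rho) T = nabla°(theta* + rho) - H(rho)/2
   and (theta* - rho) phi = nabla° rho - rho T, where nabla° = nabla^LC - Gamma
   differs from the Levi-Civita derivative on TM by the connection matrix Gamma of
   D, which omega = Gamma - phi + T puts back.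
   Lowering the TM index with g turns theta* into theta. Symmetrising the first
   equation gives L_(rho_a) g (metric compatibility of nabla^LC); antisymmetrising
   the second gives d theta_a (torsion-freeness) and i_(rho_a) H (skew-symmetry
   of H). *)

Section Derivability.
Context {R : numFieldType} {V : normedModType R}.
Implicit Types (x v : V).

Lemma derivable_bigsum (I : finType) (F : I -> V -> R) x v :
  (forall i, derivable (F i) x v) -> derivable (fun y => \sum_i F i y) x v.
Proof.
move=> dF; rewrite -fct_sumE; apply: (big_ind (fun h : V -> R => derivable h x v)).
- exact: derivable_cst.
- by move=> f h; exact: derivableD.
- by move=> i _; exact: dF.
Qed.

Lemma derivable_bigprod (I : finType) (F : I -> V -> R) x v :
  (forall i, derivable (F i) x v) -> derivable (fun y => \prod_i F i y) x v.
Proof.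
move=> dF; rewrite -fct_prodE; apply: (big_ind (fun h : V -> R => derivable h x v)).
- exact: derivable_cst.
- by move=> f h; exact: derivableM.
- by move=> i _; exact: dF.
Qed.

Lemma derivable_det m (M : V -> 'M[R]_m) x v :
  (forall i j, derivable (fun y => M y i j) x v) ->
  derivable (fun y => \det (M y)) x v.
Proof.
move=> dM; apply: derivable_bigsum => s.
apply/derivableM/derivable_bigprod => [|i]; [exact: derivable_cst | exact: dM].
Qed.

Lemma derivable_invmx m (M : V -> 'M[R]_m) x v k l :
  (forall i j, derivable (fun y => M y i j) x v) ->
  (\forall y \near x, M y \in unitmx) ->
  derivable (fun y => invmx (M y) k l) x v.
Proof.
move=> dM Munit.
apply: (@near_eq_derivable _ _ _ (fun y => (\det (M y))^-1 * cofactor (M y) l k)).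
  by near=> y; rewrite /invmx (near Munit y) // !mxE.
apply: derivableM.
  apply: derivableV; last exact: derivable_det.
  by have := nbhs_singleton Munit; rewrite unitmxE unitfE.
apply/derivableM/derivable_det => [|i j]; first exact: derivable_cst.
apply: (@near_eq_derivable _ _ _ (fun y => M y (lift l i) (lift k j))) => //.
by near=> y; rewrite !mxE.
Unshelve. all: by end_near.
Qed.

End Derivability.

Section PartialDerivative.
Context {R : realType} {n : nat}.
Implicit Types (f h : 'rV[R]_n -> R) (x : 'rV[R]_n) (i : 'I_n).

Lemma smooth_derivable (U : set 'rV[R]_n) f x v :
  smooth_on U f -> U x -> derivable f x v.
Proof. by move=> sf Ux; apply/diff_derivable/(sf [::]). Qed.

Lemma pdD i f h x :
  derivable f x (delta_mx 0 i) -> derivable h x (delta_mx 0 i) ->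
  pd i (fun y => f y + h y) x = pd i f x + pd i h x.
Proof. by move=> df dh; rewrite /pd (deriveD df dh). Qed.

Lemma pdM i f h x :
  derivable f x (delta_mx 0 i) -> derivable h x (delta_mx 0 i) ->
  pd i (fun y => f y * h y) x = pd i f x * h x + f x * pd i h x.
Proof. by move=> df dh; rewrite /pd (deriveM df dh) addrC [_ *: _]mulrC. Qed.

Lemma pd_sum m i (F : 'I_m -> 'rV[R]_n -> R) x :
  (forall k, derivable (F k) x (delta_mx 0 i)) ->
  pd i (fun y => \sum_(k < m) F k y) x = \sum_(k < m) pd i (F k) x.
Proof. by move=> dF; rewrite /pd -fct_sumE derive_sum. Qed.

Lemma near_eq_pd i f h x : (\forall y \near x, f y = h y) -> pd i f x = pd i h x.
Proof. exact: near_eq_derive. Qed.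

End PartialDerivative.

Section PositiveDefinite.
Context {R : realFieldType} {n : nat} (G : 'M[R]_n).
Hypothesis G_posdef : forall v : 'rV[R]_n, v != 0 -> 0 < (v *m G *m v^T) 0 0.

Lemma posdef_form_eq0 (v : 'rV[R]_n) : (v *m G *m v^T) 0 0 = 0 -> v = 0.
Proof. by move=> v0; have [//|/G_posdef] := eqVneq v 0; rewrite v0 ltxx. Qed.

Lemma posdef_unitmx : G \in unitmx.
Proof.
rewrite unitmxE unitfE; apply/negP => /det0P [v /G_posdef].
by move=> + vG0; rewrite vG0 mul0mx mxE ltxx.
Qed.

Lemma unitmx_isotropic_pair (A B : 'M[R]_n) (s : R) :
  s != 0 -> A^T *m B + B^T *m A = 0 ->
  (forall c : 'cV[R]_n, A *m c = 0 -> B *m c = 0 -> c = 0) ->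
  invmx G *m B + s *: A \in unitmx.
Proof.
move=> s0 iso indep; rewrite -unitmx_tr unitmxE unitfE.
apply/negP => /det0P [v v0].
rewrite -[v]trmxK -trmx_mul -trmx0 => /trmx_inj Mc.
move: v0; rewrite -trmx_eq0; move: v^T Mc => c Mc c0.
have Bc : B *m c = - s *: (G *m (A *m c)).
  move/eqP: Mc; rewrite mulmxDl -mulmxA -scalemxAl addr_eq0 => /eqP e.
  by rewrite -[B *m c](mulKVmx posdef_unitmx) e mulmxN -scalemxAr scaleNr.
have Ac : A *m c = 0.
  apply: trmx_inj; rewrite trmx0; apply: posdef_form_eq0.
  have sym : (c^T *m (B^T *m A) *m c) 0 0 = (c^T *m (A^T *m B) *m c) 0 0.
    transitivity ((c^T *m (B^T *m A) *m c)^T 0 0); first by rewrite [RHS]mxE.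
    by rewrite !trmx_mul !trmxK !mulmxA.
  have quad : (c^T *m (A^T *m B) *m c) 0 0
      = - s * ((A *m c)^T *m G *m ((A *m c)^T)^T) 0 0.
    by rewrite trmxK trmx_mul -!mulmxA Bc -!scalemxAr !mulmxA [LHS]mxE.
  have : (c^T *m (A^T *m B + B^T *m A) *m c) 0 0 = 0.
    by rewrite iso mulmx0 mul0mx mxE.
  rewrite mulmxDr mulmxDl mxE sym quad => /eqP.
  by rewrite -mulr2n mulrn_eq0 /= mulf_eq0 oppr_eq0 (negbTE s0) => /eqP.
have Bc0 : B *m c = 0 by rewrite Bc Ac mulmx0 scaler0.
by move: c0; rewrite (indep c Ac Bc0) eqxx.
Qed.

End PositiveDefinite.

(* [P], [Q]: the matrices of rho and theta*; [Gam]: the connection matrix of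
   nabla^LC on D; [dP], [dQ]: the Levi-Civita derivatives of [P], [Q]; [Hm]: the
   H-term. The hypotheses are then the definitions of T and phi. *)
Lemma connection_coefficients_mx (R : comPzRingType) m n
    (P Q dP dQ Hm : 'M[R]_(m, n)) (Gam T Phi : 'M[R]_n) :
  (Q + P) *m T = (dQ - Q *m Gam) + (dP - P *m Gam) - Hm ->
  (Q - P) *m Phi = (dP - P *m Gam) - P *m T ->
  P *m (Gam - Phi + T) + Q *m Phi = dP /\
  Q *m (Gam - Phi + T) + P *m Phi = dQ - Hm.
Proof.
rewrite mulmxDl mulmxBl => eT ePhi.
have {}ePhi : Q *m Phi = P *m Phi + (dP - P *m Gam - P *m T).
  by rewrite -ePhi addrC subrK.
rewrite !mulmxDr !mulmxN ePhi; split; apply/matrixP => k l.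
  move: (P *m Gam) (P *m Phi) (P *m T) => A B C; rewrite !mxE; ring.
move/matrixP/(_ k l): eT.
move: (P *m Gam) (Q *m Gam) (P *m Phi) (P *m T) (Q *m T) => A B C D E.
by rewrite !mxE => /(canRL (addrK _)) ->; ring.
Qed.

Definition frame_mx {R : realType} {n : nat} (f : 'I_n -> 'I_n -> 'rV[R]_n -> R)
    (x : 'rV[R]_n) : 'M[R]_n :=
  \matrix_(k, a) f a k x.

Lemma frame_mxE {R : realType} {n : nat} f (x : 'rV[R]_n) k a :
  frame_mx f x k a = f a k x.
Proof. exact: mxE. Qed.

Definition christoffel_first_kind {R : realType} {n : nat}
    (g : 'I_n -> 'I_n -> 'rV[R]_n -> R) (j i l : 'I_n) (x : 'rV[R]_n) : R :=
  2^-1 * (pd i (g j l) x + pd l (g j i) x - pd j (g i l) x).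

Section DiracFrame.
Context {R : realType} {n : nat} (U : set 'rV[R]_n)
  (H : 'I_n -> 'I_n -> 'I_n -> 'rV[R]_n -> R) (fv feta : 'I_n -> 'I_n -> 'rV[R]_n -> R)
  (x : 'rV[R]_n).
Hypotheses (dirac : dirac_frame U H fv feta) (Ux : U x).

Lemma frame_mx_isotropic :
  (frame_mx fv x)^T *m frame_mx feta x + (frame_mx feta x)^T *m frame_mx fv x = 0.
Proof.
have [_ [_ [iso _]]] := dirac; apply/matrixP => a b.
rewrite !mxE -big_split /= -[RHS](iso x Ux a b).
by apply: eq_bigr => k _; rewrite !(mxE, frame_mxE) [feta a k x * _]mulrC.
Qed.

Lemma frame_mx_independent (c : 'cV[R]_n) :
  frame_mx fv x *m c = 0 -> frame_mx feta x *m c = 0 -> c = 0.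
Proof.
have [_ [indep _]] := dirac; move=> /matrixP c1 /matrixP c2.
apply/matrixP => a l; rewrite ord1 mxE.
apply: (indep x Ux (fun a => c a 0)) => k; [have := c1 k 0 | have := c2 k 0];
  by rewrite !mxE => e; rewrite -[RHS]e; apply: eq_bigr => b _; rewrite frame_mxE mulrC.
Qed.

End DiracFrame.

Section Metric.
Context {R : realType} {n : nat} (U : set 'rV[R]_n) (g : 'I_n -> 'I_n -> 'rV[R]_n -> R).
Hypothesis g_riemannian : riemannian_on U g.

Lemma gmx_posdef x : U x ->
  forall v : 'rV[R]_n, v != 0 -> 0 < (v *m gmx g x *m v^T) 0 0.
Proof.
have [_ [_ pos]] := g_riemannian; move=> Ux v /(pos x Ux).
rewrite mxE exchange_big; congr (0 < _); apply: eq_bigr => j _.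
by rewrite !mxE big_distrl; apply: eq_bigr => i _; rewrite !mxE.
Qed.

Lemma gmx_unit x : U x -> gmx g x \in unitmx.
Proof. by move/gmx_posdef/posdef_unitmx. Qed.

Lemma g_sym x i j : U x -> g i j x = g j i x.
Proof. by move=> Ux; have [_ [sym _]] := g_riemannian; exact: sym. Qed.

Lemma raise_index x (F : 'M[R]_n) :
  \matrix_(k, a) \sum_(m < n) ginv g k m x * F m a = invmx (gmx g x) *m F.
Proof. by apply/matrixP => k a; rewrite !mxE. Qed.

Lemma thetastar_mxE (theta : 'I_n -> 'I_n -> 'rV[R]_n -> R) x :
  frame_mx (fun a k => thetastar g theta k a) x = invmx (gmx g x) *m frame_mx theta x.
Proof.
rewrite -raise_index; apply/matrixP => k a; rewrite !mxE.
by apply: eq_bigr => j _; rewrite mxE.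
Qed.

Lemma lower_thetastar (theta : 'I_n -> 'I_n -> 'rV[R]_n -> R) x : U x ->
  gmx g x *m frame_mx (fun a k => thetastar g theta k a) x = frame_mx theta x.
Proof. by move=> Ux; rewrite thetastar_mxE mulKVmx ?gmx_unit. Qed.

End Metric.

Section Frame.
Context {R : realType} {n : nat} (U : set 'rV[R]_n)
  (g : 'I_n -> 'I_n -> 'rV[R]_n -> R) (H : 'I_n -> 'I_n -> 'I_n -> 'rV[R]_n -> R)
  (fv feta rho theta : 'I_n -> 'I_n -> 'rV[R]_n -> R) (x : 'rV[R]_n).
Hypotheses (U_open : open U) (g_riemannian : riemannian_on U g)
  (H_closed : closed_three_form_on U H) (rt_dirac : dirac_frame U H rho theta)
  (Ux : U x).

Local Notation G := (gmx g x).
Local Notation rhoM := (frame_mx rho x).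
Local Notation thetaM := (frame_mx theta x).
Local Notation sharp := (fun a k => thetastar g theta k a).
Local Notation sharpM := (frame_mx sharp x).
Local Notation dframe i f := (frame_mx (fun a k => pd i (f a k)) x).
Local Notation Gam i := (\matrix_(k, l) christoffel g k i l x).
Local Notation GamL i := (\matrix_(j, l) christoffel_first_kind g j i l x).
Local Notation GamD i := (\matrix_(c, b) GammaD g fv feta c b i x).
Local Notation HupM i := (\matrix_(k, l) Hup g H k l i x).
Local Notation HM i := (\matrix_(j, l) H j l i x).
Local Notation TM i := (\matrix_(a, b) Tcoef g H fv feta rho theta a b i x).
Local Notation PhiM i := (\matrix_(a, b) phicoef g H fv feta rho theta a b i x).
Local Notation OmM i := (\matrix_(a, b) omegacoef g H fv feta rho theta a b i x).
Local Notation nablaM i A := (\matrix_(k, b) nablaring g fv feta A i k b x).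

Lemma tsp_mxE : tsp_mx g rho theta x = sharpM + rhoM.
Proof. by apply/matrixP => k a; rewrite !(mxE, frame_mxE). Qed.

Lemma tsm_mxE : tsm_mx g rho theta x = sharpM - rhoM.
Proof. by apply/matrixP => k a; rewrite !(mxE, frame_mxE). Qed.

Lemma unitmx_tsp_tsm : tsp_mx g rho theta x \in unitmx /\ tsm_mx g rho theta x \in unitmx.
Proof.
have posdef := gmx_posdef g_riemannian Ux.
have iso := frame_mx_isotropic rt_dirac Ux.
have indep := frame_mx_independent rt_dirac Ux.
rewrite tsp_mxE tsm_mxE thetastar_mxE -[rhoM]scale1r -scaleNr.
by split; apply: (unitmx_isotropic_pair posdef _ iso indep); rewrite ?oppr_eq0 oner_eq0.
Qed.

Lemma near_U : \forall y \near x, U y.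
Proof. exact: open_nbhs_nbhs. Qed.

Lemma derivable_ginv i k l : derivable (ginv g k l) x (delta_mx 0 i).
Proof.
apply: derivable_invmx => [a b|].
  apply: (near_eq_derivable (f := g a b)); first by near=> y; rewrite mxE.
  exact: (smooth_derivable (proj1 g_riemannian a b)).
by near=> y; apply: (gmx_unit g_riemannian); near: y; exact: near_U.
Unshelve. all: by end_near.
Qed.

Lemma derivable_thetastar i k a : derivable (thetastar g theta k a) x (delta_mx 0 i).
Proof.
apply: derivable_bigsum => j; apply: derivableM; first exact: derivable_ginv.
exact: (smooth_derivable (proj2 (proj1 rt_dirac a j))).
Qed.

Lemma pd_g_sym i j k : pd i (g j k) x = pd i (g k j) x.
Proof.
apply: near_eq_pd; near=> y; apply: (g_sym g_riemannian); near: y; exact: near_U.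
Unshelve. all: by end_near.
Qed.

Lemma christoffel_mxE i : Gam i = invmx G *m GamL i.
Proof.
rewrite -raise_index; apply/matrixP => k l; rewrite !mxE /christoffel big_distrr.
by apply: eq_bigr => m _; rewrite mxE /christoffel_first_kind mulrCA.
Qed.

Lemma christoffel_first_kind_metric i j l :
  christoffel_first_kind g j i l x + christoffel_first_kind g i j l x = pd l (g i j) x.
Proof. rewrite /christoffel_first_kind (pd_g_sym l j i); lra. Qed.

Lemma christoffel_first_kind_torsion i j l :
  pd i (g j l) x - christoffel_first_kind g j i l x
  = pd j (g i l) x - christoffel_first_kind g i j l x.
Proof. rewrite /christoffel_first_kind (pd_g_sym l j i); lra. Qed.

Lemma Hup_mxE i : HupM i = invmx G *m HM i.
Proof.
rewrite -raise_index; apply/matrixP => k l; rewrite !mxE.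
by apply: eq_bigr => m _; rewrite mxE.
Qed.

Lemma nablaring_mxE i (A : 'I_n -> 'I_n -> 'rV[R]_n -> R) :
  nablaM i A = \matrix_(k, b) pd i (A k b) x + Gam i *m \matrix_(k, b) A k b x
               - \matrix_(k, b) A k b x *m GamD i.
Proof.
apply/matrixP => k b; rewrite !mxE /nablaring.
by congr (_ + _ - _); apply: eq_bigr => l _; rewrite !mxE // mulrC.
Qed.

Lemma tsp_mulmx_Tcoef i :
  tsp_mx g rho theta x *m TM i
  = nablaM i (fun k b y => thetastar g theta k b y + rho b k y)
    - 2^-1 *: (HupM i *m rhoM).
Proof.
set N := (X in _ = X).
have -> : TM i = invmx (tsp_mx g rho theta x) *m N.
  apply/matrixP => a b; rewrite !mxE; apply: eq_bigr => k _; rewrite /N !mxE.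
  by congr (_ * (_ - 2^-1 * _)); apply: eq_bigr => l _; rewrite !(mxE, frame_mxE) mulrC.
by rewrite mulKVmx // (proj1 unitmx_tsp_tsm).
Qed.

Lemma tsm_mulmx_phicoef i :
  tsm_mx g rho theta x *m PhiM i
  = nablaM i (fun k b y => rho b k y) - rhoM *m TM i.
Proof.
set N := (X in _ = X).
have -> : PhiM i = invmx (tsm_mx g rho theta x) *m N.
  apply/matrixP => a b; rewrite !mxE; apply: eq_bigr => k _; rewrite /N !mxE.
  by congr (_ * (_ - _)); apply: eq_bigr => c _; rewrite !(mxE, frame_mxE).
by rewrite mulKVmx // (proj2 unitmx_tsp_tsm).
Qed.

Lemma omegacoef_mxE i : OmM i = GamD i - PhiM i + TM i.
Proof. by apply/matrixP => a b; rewrite !mxE. Qed.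

Lemma nablaring_mxD i :
  nablaM i (fun k b y => thetastar g theta k b y + rho b k y)
  = nablaM i (thetastar g theta) + nablaM i (fun k b y => rho b k y).
Proof.
have dsum : \matrix_(k, b) pd i (fun y => thetastar g theta k b y + rho b k y) x
    = \matrix_(k, b) pd i (thetastar g theta k b) x + \matrix_(k, b) pd i (rho b k) x.
  apply/matrixP => k b; rewrite !mxE pdD //; first exact: derivable_thetastar.
  exact: (smooth_derivable (proj1 (proj1 rt_dirac b k))).
have Asum : \matrix_(k, b) (thetastar g theta k b x + rho b k x)
    = \matrix_(k, b) thetastar g theta k b x + \matrix_(k, b) rho b k x.
  by apply/matrixP => k b; rewrite !mxE.
rewrite !nablaring_mxE dsum Asum mulmxDr mulmxDl.
by apply/matrixP => k b; rewrite !mxE; ring.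
Qed.

Lemma structure_equations i :
  rhoM *m OmM i + sharpM *m PhiM i = dframe i rho + Gam i *m rhoM /\
  sharpM *m OmM i + rhoM *m PhiM i
  = dframe i sharp + Gam i *m sharpM - 2^-1 *: (HupM i *m rhoM).
Proof.
rewrite omegacoef_mxE; apply: connection_coefficients_mx.
  by rewrite -tsp_mxE tsp_mulmx_Tcoef nablaring_mxD !nablaring_mxE.
by rewrite -tsm_mxE tsm_mulmx_phicoef nablaring_mxE.
Qed.

Lemma structure_equations_lowered i :
  G *m rhoM *m OmM i + thetaM *m PhiM i = G *m dframe i rho + GamL i *m rhoM /\
  thetaM *m OmM i + G *m rhoM *m PhiM i
  = G *m dframe i sharp + GamL i *m sharpM - 2^-1 *: (HM i *m rhoM).
Proof.
have GQ := lower_thetastar g_riemannian theta Ux.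
have GGam : G *m Gam i = GamL i.
  by rewrite christoffel_mxE mulKVmx // (gmx_unit g_riemannian).
have GH : G *m HupM i = HM i by rewrite Hup_mxE mulKVmx // (gmx_unit g_riemannian).
have [e1 e2] := structure_equations i.
split; rewrite -GQ -!mulmxA -mulmxDr.
  by rewrite e1 mulmxDr mulmxA GGam.
by rewrite e2 mulmxBr mulmxDr -scalemxAr !mulmxA GGam GH.
Qed.

Lemma gmx_frameE f q a : (G *m frame_mx f x) q a = \sum_(k < n) g q k x * f a k x.
Proof. by rewrite mxE; apply: eq_bigr => k _; rewrite mxE frame_mxE. Qed.

Lemma christoffel_frameE p f q a :
  (GamL p *m frame_mx f x) q a
  = \sum_(l < n) christoffel_first_kind g q p l x * f a l x.
Proof. by rewrite mxE; apply: eq_bigr => l _; rewrite mxE frame_mxE. Qed.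

Lemma lowered_derivativeE p f q a :
  (G *m dframe p f + GamL p *m frame_mx f x) q a
  = \sum_(k < n) g q k x * pd p (f a k) x
    + \sum_(l < n) christoffel_first_kind g q p l x * f a l x.
Proof. by rewrite mxE gmx_frameE christoffel_frameE. Qed.

Lemma iota_g_mxE b j : iota_g g (rho b) j x = (G *m rhoM) j b.
Proof.
by rewrite gmx_frameE; apply: eq_bigr => k _; rewrite (g_sym g_riemannian k j Ux).
Qed.

Lemma lie_metric_covariantE a i j :
  lie_metric g (rho a) i j x
  = (G *m dframe i rho + GamL i *m rhoM) j a + (G *m dframe j rho + GamL j *m rhoM) i a.
Proof.
have compat : \sum_(k < n) rho a k x * pd k (g i j) x
    = \sum_(l < n) christoffel_first_kind g j i l x * rho a l x
      + \sum_(l < n) christoffel_first_kind g i j l x * rho a l x.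
  rewrite -big_split /=; apply: eq_bigr => l _.
  by rewrite -mulrDl christoffel_first_kind_metric mulrC.
have gsym : \sum_(k < n) g k j x * pd i (rho a k) x
    = \sum_(k < n) g j k x * pd i (rho a k) x.
  by apply: eq_bigr => k _; rewrite (g_sym g_riemannian k j Ux).
by rewrite /lie_metric !big_split /= compat gsym !lowered_derivativeE; ring.
Qed.

Lemma dtheta_covariantE a i j :
  pd i (theta a j) x - pd j (theta a i) x
  = (G *m dframe i sharp + GamL i *m sharpM) j a
    - (G *m dframe j sharp + GamL j *m sharpM) i a.
Proof.
have pd_theta p q : pd p (theta a q) x
    = \sum_(k < n) (pd p (g q k) x * thetastar g theta k a x
                    + g q k x * pd p (thetastar g theta k a) x).
  have dg k : derivable (g q k) x (delta_mx 0 p).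
    exact: (smooth_derivable (proj1 g_riemannian q k)).
  rewrite (@near_eq_pd _ _ _ _ (fun y => \sum_(k < n) g q k y * thetastar g theta k a y)).
    rewrite pd_sum => [|k]; last by apply: derivableM; [exact: dg | exact: derivable_thetastar].
    by apply: eq_bigr => k _; rewrite pdM //; exact: derivable_thetastar.
  near=> y; rewrite -(frame_mxE theta y q a) -(lower_thetastar g_riemannian theta).
    by rewrite mxE; apply: eq_bigr => k _; rewrite mxE frame_mxE.
  by near: y; exact: near_U.
have torsion : \sum_(l < n) pd i (g j l) x * thetastar g theta l a x
    - \sum_(l < n) christoffel_first_kind g j i l x * thetastar g theta l a x
  = \sum_(l < n) pd j (g i l) x * thetastar g theta l a x
    - \sum_(l < n) christoffel_first_kind g i j l x * thetastar g theta l a x.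
  rewrite -!sumrB; apply: eq_bigr => l _.
  by rewrite -!mulrBl christoffel_first_kind_torsion.
by rewrite !pd_theta !big_split /= !lowered_derivativeE; lra.
Unshelve. all: by end_near.
Qed.

Lemma iota_rho_H_skew a i j :
  \sum_(k < n) rho a k x * H k i j x
  = 2^-1 * ((HM i *m rhoM) j a - (HM j *m rhoM) i a).
Proof.
have [_ [skew12 [skew23 _]]] := H_closed.
rewrite !mxE -sumrB big_distrr; apply: eq_bigr => l _; rewrite !(mxE, frame_mxE).
rewrite (skew12 x Ux j l i) (skew23 x Ux l j i) (skew12 x Ux i l j) /=.
by field.
Qed.

Lemma lie_metric_rhoE a i j :
  lie_metric g (rho a) i j x =
    \sum_(b < n) (omegacoef g H fv feta rho theta b a i x * iota_g g (rho b) j x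
                  + iota_g g (rho b) i x * omegacoef g H fv feta rho theta b a j x)
  + \sum_(b < n) (phicoef g H fv feta rho theta b a i x * theta b j x
                  + theta b i x * phicoef g H fv feta rho theta b a j x).
Proof.
have [e_i _] := structure_equations_lowered i; have [e_j _] := structure_equations_lowered j.
rewrite lie_metric_covariantE -e_i -e_j !mxE -!big_split /=.
by apply: eq_bigr => b _; rewrite !iota_g_mxE !mxE; ring.
Qed.

Lemma iota_rho_HE a i j :
  \sum_(k < n) rho a k x * H k i j x =
    (pd i (theta a j) x - pd j (theta a i) x)
  - \sum_(b < n) (omegacoef g H fv feta rho theta b a i x * theta b j x
                  - theta b i x * omegacoef g H fv feta rho theta b a j x)
  - \sum_(b < n) (phicoef g H fv feta rho theta b a i x * iota_g g (rho b) j x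
                  - iota_g g (rho b) i x * phicoef g H fv feta rho theta b a j x).
Proof.
have [_ e_i] := structure_equations_lowered i; have [_ e_j] := structure_equations_lowered j.
rewrite dtheta_covariantE iota_rho_H_skew.
rewrite (canRL (subrK _) (esym e_i)) (canRL (subrK _) (esym e_j)).
have sums : \sum_(b < n) (omegacoef g H fv feta rho theta b a i x * theta b j x
                  - theta b i x * omegacoef g H fv feta rho theta b a j x)
  + \sum_(b < n) (phicoef g H fv feta rho theta b a i x * iota_g g (rho b) j x
                  - iota_g g (rho b) i x * phicoef g H fv feta rho theta b a j x)
  = (thetaM *m OmM i + G *m rhoM *m PhiM i) j a
    - (thetaM *m OmM j + G *m rhoM *m PhiM j) i a.
  rewrite !mxE -!big_split -sumrB /=.
  by apply: eq_bigr => b _; rewrite !iota_g_mxE !mxE; ring.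
by rewrite -addrA -opprD sums !mxE; lra.
Qed.

End Frame.

Theorem mainTheorem1 (R : realType) (n : nat) (U : set 'rV[R]_n)
    (g : 'I_n -> 'I_n -> 'rV[R]_n -> R)
    (H : 'I_n -> 'I_n -> 'I_n -> 'rV[R]_n -> R)
    (fv feta rho theta : 'I_n -> 'I_n -> 'rV[R]_n -> R) :
  open U ->
  riemannian_on U g ->
  closed_three_form_on U H ->
  dirac_frame U H fv feta ->
  dirac_frame U H rho theta ->
  (forall x, U x -> tsp_mx g rho theta x \in unitmx /\ tsm_mx g rho theta x \in unitmx) /\
  (forall (a : 'I_n) (x : 'rV[R]_n), U x -> forall i j : 'I_n,
     lie_metric g (rho a) i j x =
       \sum_(b < n) (omegacoef g H fv feta rho theta b a i x * iota_g g (rho b) j x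
                     + iota_g g (rho b) i x * omegacoef g H fv feta rho theta b a j x)
     + \sum_(b < n) (phicoef g H fv feta rho theta b a i x * theta b j x
                     + theta b i x * phicoef g H fv feta rho theta b a j x)
   /\
     \sum_(k < n) rho a k x * H k i j x =
       (pd i (theta a j) x - pd j (theta a i) x)
     - \sum_(b < n) (omegacoef g H fv feta rho theta b a i x * theta b j x
                     - theta b i x * omegacoef g H fv feta rho theta b a j x)
     - \sum_(b < n) (phicoef g H fv feta rho theta b a i x * iota_g g (rho b) j x
                     - iota_g g (rho b) i x * phicoef g H fv feta rho theta b a j x)).
Proof.
move=> U_open g_riemannian H_closed _ rt_dirac.
split=> [x Ux | a x Ux i j]; first exact: (unitmx_tsp_tsm g_riemannian rt_dirac Ux).
split; first exact: (lie_metric_rhoE fv feta U_open g_riemannian rt_dirac Ux).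
exact: (iota_rho_HE fv feta U_open g_riemannian H_closed rt_dirac Ux).
Qed.
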